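(* Let $m,\nu$ be positive integers with $\nu\ge2$ and $\ell(m)\ge\nu-1$, where $\ell(m)$ is the number of prime factors of $m$ counted with multiplicity. Then there exists a numerical semigroup $S$ with multiplicity $m(S)=m$, embedding dimension $\nu(S)=\nu$, and $\alpha$-rectangular Apéry set.
   Context: A numerical semigroup is a submonoid $S$ of $(\mathbb N,+)$ with finite complement in $\mathbb N$; $g_1<\dots<g_\nu$ is its minimal system of generators, $\nu(S)=\nu$ its embedding dimension, $m(S)=g_1$ its multiplicity, and $\mathrm{Ap}(S)=\{s\in S: s-m(S)\notin S\}$. For $i=2,\dots,\nu$, $\alpha_i=\max\{h\in\mathbb N: hg_i\in\mathrm{Ap}(S)\}$, and $\mathrm{Ap}(S)$ is $\alpha$-rectangular if $\mathrm{Ap}(S)=\{\sum_{i=2}^\nu\lambda_ig_i: 0\le\lambda_i\le\alpha_i\}$. *)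

From mathcomp Require Import all_boot.
Set Implicit Arguments. Unset Strict Implicit. Unset Printing Implicit Defensive.

Definition numerical_semigroup (S : pred nat) : Prop :=
  [/\ 0 \in S,
      (forall a b, a \in S -> b \in S -> a + b \in S)
    & exists N, forall n, N <= n -> n \in S].

Definition minimal_generator (S : pred nat) (g : nat) : Prop :=
  [/\ g \in S, 0 < g &
      ~ (exists a b, [/\ 0 < a, 0 < b, a \in S, b \in S & a + b = g])].

Definition minimal_generators (S : pred nat) (gs : seq nat) : Prop :=
  sorted ltn gs /\ (forall g, g \in gs <-> minimal_generator S g).

Definition multiplicity (S : pred nat) (m : nat) : Prop :=
  [/\ m \in S, 0 < m & forall s, s \in S -> 0 < s -> m <= s].

Definition embedding_dimension (S : pred nat) (nu : nat) : Prop :=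
  exists gs, minimal_generators S gs /\ size gs = nu.

(* s \in Ap(S, m)  iff  s \in S and s - m \notin S (as an integer). *)
Definition apery (S : pred nat) (m s : nat) : Prop :=
  s \in S /\ ~ (m <= s /\ (s - m) \in S).

Definition is_alpha (S : pred nat) (m g a : nat) : Prop :=
  apery S m (a * g) /\ (forall h, apery S m (h * g) -> h <= a).

(* Ap(S) is alpha-rectangular, with gs = [:: g_1 & rest] the minimal
   generators, m(S) = g_1, and alphas the alpha_i for i = 2..nu. *)
Definition alpha_rectangular (S : pred nat) : Prop :=
  exists gs, minimal_generators S gs /\
  exists alphas : seq nat,
    [/\ size alphas = (size gs).-1,
        (forall i, i < size alphas ->
           is_alpha S (head 0 gs) (nth 0 (behead gs) i) (nth 0 alphas i))
      & forall x, apery S (head 0 gs) x <->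
          exists lam : seq nat,
            [/\ size lam = size alphas,
                (forall i, i < size lam -> nth 0 lam i <= nth 0 alphas i)
              & x = \sum_(i < size lam) nth 0 lam i * nth 0 (behead gs) i]].

Definition bigomega (m : nat) : nat := \sum_(p <- primes m) logn p m.

From mathcomp Require Import all_boot zify boolp.
Set Implicit Arguments. Unset Strict Implicit. Unset Printing Implicit Defensive.

(* Proof of Theorem 1.1.  Since l(m) >= nu - 1 =: k, the integer m factors as
   m = a_0 * a_1 * ... * a_(k-1) with every a_i > 1.  The mixed-radix place
   values b_i = a_0 * ... * a_(i-1) satisfy 1 = b_0 < b_1 < ... < b_k = m, and
   S = <m, m + b_0, ..., m + b_(k-1)> is the required semigroup.  Writing
   g_i = m + b_i, the element sum_i mu_i g_i equals (sum_i mu_i) m + sum_i mu_i b_i,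
   and the "carry" relations a_i g_i = (a_i - 1) m + g_(i+1), a_(k-1) g_(k-1) =
   (a_(k-1) + 1) m show that Ap(S, m) consists exactly of the sums
   sum_i lambda_i g_i whose coefficients are mixed-radix digits
   (lambda_i < a_i); uniqueness of mixed-radix expansions shows that no such
   sum lies in m + S. *)

(* Every prime outside the support of n contributes nothing to bigomega n. *)
Lemma bigomega_seq n (s : seq nat) : 0 < n -> uniq s -> {subset primes n <= s} ->
  \sum_(q <- s) logn q n = bigomega n.
Proof.
move=> n0 us sub; rewrite (bigID (fun q => q \in primes n)) /=.
rewrite [X in _ + X]big1 ?addn0; last first.
  by move=> q /negbTE nq; apply/eqP; rewrite -leqn0 leqNgt logn_gt0 nq.
rewrite -big_filter /bigomega; apply: perm_big.
apply: uniq_perm; [by rewrite filter_uniq | exact: primes_uniq |].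
by move=> q; rewrite mem_filter; case: (q \in primes n) (sub q) => //= ->.
Qed.

Lemma bigomegaM p n : prime p -> 0 < n -> bigomega (p * n) = (bigomega n).+1.
Proof.
move=> pp n0; have p0 := prime_gt0 pp.
have pn0 : 0 < p * n by rewrite muln_gt0 p0.
rewrite {1}/bigomega (eq_bigr (fun q => logn q p + logn q n)); last first.
  by move=> q _; rewrite lognM.
rewrite big_split /= !bigomega_seq ?primes_uniq //.
- by rewrite /bigomega primes_prime // big_seq1 logn_prime // eqxx.
- by move=> q; rewrite !mem_primes => /and3P[-> _ /= qd]; rewrite pn0 dvdn_mull.
- by move=> q; rewrite !mem_primes => /and3P[-> _ /= qd]; rewrite pn0 dvdn_mulr.
Qed.

(* A positive n with at least k > 0 prime factors is a product of k factors
   all greater than 1 (split off the smallest prime k - 1 times). *)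
Lemma bigomega_factorization k n : 0 < k -> 0 < n -> k <= bigomega n ->
  exists a : nat -> nat, (forall i, i < k -> 1 < a i) /\ n = \prod_(i < k) a i.
Proof.
elim: k n => // k IH n _ n0 kn.
have n_gt1 : 1 < n.
  have : n != 1 by apply: contraTneq kn => ->; rewrite /bigomega big_nil.
  lia.
have p_prime := pdiv_prime n_gt1; set p := pdiv n in p_prime.
have np : n = p * (n %/ p) by rewrite mulnC divnK // pdiv_dvd.
have np0 : 0 < n %/ p by rewrite divn_gt0 ?prime_gt0 // dvdn_leq // pdiv_dvd.
case: k IH kn => [|k] IH kn.
  by exists (fun _ => n); split=> [[]|]; rewrite ?big_ord1.
rewrite np bigomegaM // ltnS in kn.
have [a [a_gt1 ea]] := IH _ erefl np0 kn.
exists (fun i => if i < k.+1 then a i else p); split.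
  by move=> i; case: ifP => [ik _ | _ _]; [exact: a_gt1 | exact: prime_gt1].
rewrite np ea [RHS]big_ord_recr /= ltnn mulnC; congr (_ * _).
by apply: eq_bigr => i _; rewrite ltn_ord.
Qed.

Lemma divmod_uniq d q1 r1 q2 r2 : r1 < d -> r2 < d ->
  q1 * d + r1 = q2 * d + r2 -> q1 = q2 /\ r1 = r2.
Proof.
move=> r1d r2d E; have d0 : 0 < d by apply: leq_ltn_trans r1d.
have := congr1 (divn^~ d) E; have := congr1 (modn^~ d) E.
rewrite /= !divnMDl // !modnMDl !modn_small // (divn_small r1d) (divn_small r2d).
by rewrite !addn0 => -> ->.
Qed.

Definition delta (j v i : nat) : nat := if i == j then v else 0.

Lemma sum_delta n (w : nat -> nat) j v : j < n ->
  \sum_(i < n) delta j v i * w i = v * w j.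
Proof.
move=> jn; rewrite (bigD1 (Ordinal jn)) //= /delta eqxx big1 ?addn0 // => i ij.
by rewrite ifN ?mul0n //; apply: contra ij => /eqP eij; apply/eqP/val_inj.
Qed.

Lemma total_delta n j v : j < n -> \sum_(i < n) delta j v i = v.
Proof.
move=> jn; rewrite -[RHS]muln1 -(sum_delta (fun=> 1) v jn).
by apply: eq_bigr => i _; rewrite muln1.
Qed.

Lemma sum_shift n (f w : nat -> nat) j v : j < n ->
  \sum_(i < n) (f i + delta j v i) * w i = \sum_(i < n) f i * w i + v * w j.
Proof.
move=> jn; rewrite -(sum_delta w v jn) -big_split /=.
by apply: eq_bigr => i _; rewrite mulnDl.
Qed.

Lemma total_shift n (f : nat -> nat) j v : j < n ->
  \sum_(i < n) (f i + delta j v i) = \sum_(i < n) f i + v.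
Proof. by move=> jn; rewrite big_split /= total_delta. Qed.

Lemma delta_restore (mu : nat -> nat) j v : v <= mu j ->
  forall i, mu i - delta j v i + delta j v i = mu i.
Proof. by move=> vmu i; rewrite /delta; case: eqP => [->|]; rewrite ?subnK ?subn0. Qed.

Section Construction.
Variables (k : nat) (a : nat -> nat).
Hypothesis a_gt1 : forall i, i < k -> 1 < a i.

Definition place (i : nat) : nat := \prod_(j < i) a j.
Definition is_digits (n : nat) (mu : nat -> nat) : Prop := forall i, i < n -> mu i < a i.
Definition radix_value (n : nat) (mu : nat -> nat) : nat := \sum_(i < n) mu i * place i.

Lemma place0 : place 0 = 1.
Proof. by rewrite /place big_ord0. Qed.

Lemma placeS i : place i.+1 = place i * a i.
Proof. by rewrite /place big_ord_recr. Qed.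

Lemma place_gt0 i : i <= k -> 0 < place i.
Proof.
elim: i => [|i IH] ik; first by rewrite place0.
by rewrite placeS muln_gt0 IH ?(ltnW ik) // (ltn_trans _ (a_gt1 ik)).
Qed.

Lemma place_ltS i : i < k -> place i < place i.+1.
Proof. by move=> ik; rewrite placeS ltn_Pmulr ?a_gt1 // place_gt0 // ltnW. Qed.

Lemma place_lt i j : i < j -> j <= k -> place i < place j.
Proof.
elim: j => // j IH; rewrite ltnS leq_eqVlt => /orP[/eqP -> | ij] jk; first exact: place_ltS.
exact: ltn_trans (IH ij (ltnW jk)) (place_ltS jk).
Qed.

Lemma radix_value_lt n mu : n <= k -> is_digits n mu -> radix_value n mu < place n.
Proof.
elim: n => [|n IH] nk dmu; first by rewrite /radix_value big_ord0 place0.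
have low := IH (ltnW nk) (fun i ilt => dmu i (ltnW ilt)).
rewrite /radix_value big_ord_recr /= placeS.
apply: (leq_trans (n := (mu n).+1 * place n)); first by rewrite mulSn ltn_add2r.
by rewrite [place n * _]mulnC leq_mul2r dmu ?orbT.
Qed.

Lemma radix_digits n r : n <= k -> r < place n ->
  exists2 mu, is_digits n mu & radix_value n mu = r.
Proof.
elim: n r => [|n IH] r nk rn.
  by exists (fun _ => 0) => //; move: rn; rewrite /radix_value big_ord0 place0; case: r.
have pn := place_gt0 (ltnW nk).
have [mu dmu val_mu] := IH (r %% place n) (ltnW nk) (ltn_pmod _ pn).
exists (fun i => if i == n then r %/ place n else mu i).
  move=> i; rewrite ltnS leq_eqVlt => /orP[/eqP ->|ilt]; first by rewrite eqxx ltn_divLR // mulnC -placeS.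
  by rewrite (ltn_eqF ilt) dmu.
rewrite /radix_value big_ord_recr /= eqxx (eq_bigr (fun i : 'I_n => mu i * place i)); last first.
  by move=> i _; rewrite (ltn_eqF (ltn_ord i)).
by rewrite -/(radix_value n mu) val_mu addnC -divn_eq.
Qed.

Lemma radix_value_inj n mu nu : n <= k -> is_digits n mu -> is_digits n nu ->
  radix_value n mu = radix_value n nu -> forall i, i < n -> mu i = nu i.
Proof.
elim: n => [|n IH] // nk dmu dnu E.
have dmu' : is_digits n mu by move=> i /ltnW /dmu.
have dnu' : is_digits n nu by move=> i /ltnW /dnu.
move: E; rewrite /radix_value !big_ord_recr /= ![_ + _ * place n]addnC.
case/divmod_uniq; rewrite -?/(radix_value n _) ?radix_value_lt ?(ltnW nk) // => top low i.
by rewrite ltnS leq_eqVlt => /orP[/eqP -> //|]; apply: IH; rewrite ?(ltnW nk).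
Qed.

Definition mult : nat := place k.
Definition gen (i : nat) : nat := mult + place i.

Lemma mult_gt0 : 0 < mult.
Proof. exact: place_gt0. Qed.

Lemma gen_carry j : j.+1 < k -> a j * gen j = (a j).-1 * mult + gen j.+1.
Proof.
move=> jk; have aj := a_gt1 (ltnW jk).
rewrite /gen placeS mulnDr [place j * _]mulnC addnA; congr (_ + _).
by rewrite -[in LHS](prednK (ltnW aj)) mulSn addnC.
Qed.

Lemma gen_carry_last j : j.+1 = k -> a j * gen j = (a j).+1 * mult.
Proof. by move=> jk; rewrite /gen /mult -jk placeS mulnDr mulSn addnC mulnC. Qed.

Lemma gen_lt_double i : i < k -> gen i < mult + mult.
Proof. by move=> ik; rewrite /gen ltn_add2l place_lt. Qed.

Definition total (mu : nat -> nat) : nat := \sum_(i < k) mu i.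
Definition comb (mu : nat -> nat) : nat := \sum_(i < k) mu i * gen i.

Lemma comb_split mu : comb mu = total mu * mult + radix_value k mu.
Proof.
rewrite /comb /total /radix_value big_distrl -big_split /=.
by apply: eq_bigr => i _; rewrite mulnDr.
Qed.

Lemma comb_delta j v : j < k -> comb (delta j v) = v * gen j.
Proof. exact: sum_delta. Qed.

Lemma comb_add mu1 mu2 : comb (fun i => mu1 i + mu2 i) = comb mu1 + comb mu2.
Proof. by rewrite /comb -big_split; apply: eq_bigr => i _; rewrite mulnDl. Qed.

Lemma comb_remove mu j v : j < k -> v <= mu j ->
  comb mu = comb (fun i => mu i - delta j v i) + v * gen j.
Proof.
move=> jk vmu; rewrite /comb -(sum_shift (fun i => mu i - delta j v i) gen v jk).
by apply: eq_bigr => i _; rewrite delta_restore.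
Qed.

Lemma total_remove mu j v : j < k -> v <= mu j ->
  total mu = total (fun i => mu i - delta j v i) + v.
Proof.
move=> jk vmu; rewrite /total -(total_shift (fun i => mu i - delta j v i) v jk).
by apply: eq_bigr => i _; rewrite delta_restore.
Qed.

Lemma carry mu j : j < k -> a j <= mu j ->
  exists mu' c, [/\ total mu' < total mu, 0 < c & comb mu = comb mu' + c * mult].
Proof.
move=> jk ajmu; have aj := a_gt1 jk.
set f := fun i => mu i - delta j (a j) i.
have comb_f := comb_remove jk ajmu; have total_f := total_remove jk ajmu.
rewrite -/f in comb_f total_f.
case: (ltnP j.+1 k) => [jk'|kj].
  exists (fun i => f i + delta j.+1 1 i), (a j).-1; split.
  - by rewrite total_f /total total_shift // -/(total f); lia.
  - lia.
  - by rewrite comb_f gen_carry // /comb sum_shift // mul1n; lia.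
exists f, (a j).+1; split => //; first lia.
by rewrite comb_f gen_carry_last //; apply/eqP; rewrite eqn_leq kj jk.
Qed.

Lemma digitsP mu : is_digits k mu \/ exists2 j, j < k & a j <= mu j.
Proof.
case: (boolP [forall i : 'I_k, mu i < a i]) => [/forallP dmu | /forallPn [j]].
  by left => i ik; exact: (dmu (Ordinal ik)).
by rewrite -leqNgt => ajmu; right; exists (nat_of_ord j).
Qed.

Definition Srep (x : nat) : Prop := exists c mu, x = c * mult + comb mu.
Definition S : pred nat := fun x => `[< Srep x >].

Lemma inSP x : reflect (Srep x) (x \in S).
Proof. exact: asboolP. Qed.

Lemma Srep_add x y : Srep x -> Srep y -> Srep (x + y).
Proof.
move=> [c1 [mu1 ->]] [c2 [mu2 ->]]; exists (c1 + c2), (fun i => mu1 i + mu2 i).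
by rewrite comb_add mulnDl; lia.
Qed.

Lemma Srep_mult c : Srep (c * mult).
Proof. by exists c, (fun _ => 0); rewrite /comb big1 ?addn0. Qed.

Lemma Srep_comb mu : Srep (comb mu).
Proof. by exists 0, mu. Qed.

(* Every integer >= (sum_i a_i) m lies in S: write its residue modulo m in
   mixed radix and compensate the digit sum with copies of m. *)
Lemma Srep_large n : (\sum_(i < k) a i) * mult <= n -> Srep n.
Proof.
move=> large; have [lam dlam val_lam] := radix_digits (leqnn k) (ltn_pmod n mult_gt0).
have tot_lam : total lam <= n %/ mult.
  rewrite leq_divRL ?mult_gt0 //; apply: leq_trans large; rewrite leq_mul2r.
  by apply/orP; right; apply: leq_sum => i _; exact/ltnW/dlam.
exists (n %/ mult - total lam), lam.
by rewrite comb_split val_lam -/mult mulnBl addnA subnK ?leq_mul2r ?tot_lam ?orbT -?divn_eq.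
Qed.

Lemma comb_in_m_plus_S mu j : j < k -> a j <= mu j -> exists2 s, Srep s & comb mu = mult + s.
Proof.
move=> jk ajmu; have [mu' [c [_ c0 ->]]] := carry jk ajmu.
exists ((c.-1) * mult + comb mu'); first exact: Srep_add (Srep_mult _) (Srep_comb _).
by rewrite -(prednK c0) mulSn; lia.
Qed.

Lemma comb_normal_form mu : exists2 nu, is_digits k nu & exists t, comb mu = comb nu + t * mult.
Proof.
have [n] := ubnP (total mu); elim: n mu => // n IH mu totn.
case: (digitsP mu) => [dmu | [j jk ajmu]]; first by exists mu => //; exists 0; rewrite addn0.
have [mu' [c [tot' _ ->]]] := carry jk ajmu.
have [nu dnu [t ->]] := IH mu' (leq_trans tot' totn).
by exists nu => //; exists (t + c); rewrite mulnDl addnA.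
Qed.

(* Two digit combinations never differ by a nonzero multiple of m: compare
   quotients and remainders modulo m, then use uniqueness of digits. *)
Lemma digits_comb_rigid lam nu q : is_digits k lam -> is_digits k nu ->
  comb lam = comb nu + q * mult -> q = 0.
Proof.
move=> dlam dnu; rewrite !comb_split addnAC -mulnDl.
case/divmod_uniq; rewrite ?radix_value_lt // => tot val.
suff : total lam = total nu by lia.
by apply: eq_bigr => i _; apply: radix_value_inj (ltn_ord i).
Qed.

Lemma aperyE x : apery S mult x <-> Srep x /\ ~ (mult <= x /\ Srep (x - mult)).
Proof.
split=> -[sx nap]; split; try exact/inSP.
- by move=> [mx /inSP sub]; apply: nap.
- by move=> [mx sub]; apply: nap; split=> //; exact/inSP.
Qed.

Lemma apery_digits x : apery S mult x <-> exists2 lam, is_digits k lam & x = comb lam.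
Proof.
rewrite aperyE; split.
  move=> [[[|c] [mu ->]] nap]; last first.
    by case: nap; split; [rewrite mulSn; lia | exists c, mu; rewrite mulSn; lia].
  rewrite mul0n add0n in nap *.
  case: (digitsP mu) => [dmu | [j jk ajmu]]; first by exists mu.
  have [s ss E] := comb_in_m_plus_S jk ajmu.
  by case: nap; rewrite E addKn; split=> //; exact: leq_addr.
move=> [lam dlam ->]; split; first exact: Srep_comb.
move=> [mx [c [mu E]]].
have [nu dnu [t Enu]] := comb_normal_form mu.
suff : (c + t).+1 = 0 by [].
by apply: digits_comb_rigid dlam dnu _; rewrite mulSn mulnDl; lia.
Qed.

Lemma delta_digits j v : v < a j -> is_digits k (delta j v).
Proof. by move=> vj i ik; rewrite /delta; case: eqP => [-> // | _]; exact: ltnW (a_gt1 ik). Qed.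

Lemma alpha_gen i : i < k -> is_alpha S mult (gen i) (a i).-1.
Proof.
move=> ik; have ai := a_gt1 ik; split.
  apply/apery_digits; exists (delta i (a i).-1); last by rewrite comb_delta.
  by apply: delta_digits; lia.
move=> h [_ nap]; rewrite leqNgt; apply/negP => hi.
have [s /inSP ss E] := @comb_in_m_plus_S (delta i h) i ik (ltac:(rewrite /delta eqxx; lia)).
by apply: nap; rewrite -comb_delta // E addKn; split=> //; exact: leq_addr.
Qed.

Definition gens : seq nat := mult :: mkseq gen k.

Lemma gen_path l n x : x < gen n -> n + l <= k -> path ltn x (map gen (iota n l)).
Proof.
elim: l n x => [|l IH] n x xn nlk //=; rewrite xn /=.
by apply: IH; [rewrite /gen ltn_add2l place_ltS | ]; lia.
Qed.

Lemma gens_sorted : sorted ltn gens.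
Proof. by apply: gen_path; rewrite /gen ?place0 ?addn1. Qed.

Lemma gens_Srep g : g \in gens -> Srep g.
Proof.
rewrite in_cons => /orP[/eqP -> | /mapP[i]]; first by rewrite -[mult]mul1n; exact: Srep_mult.
by rewrite mem_iota => /andP[_ ik] ->; rewrite -[gen i]mul1n -comb_delta //; exact: Srep_comb.
Qed.

Lemma gens_bounds g : g \in gens -> mult <= g < mult + mult.
Proof.
rewrite in_cons => /orP[/eqP -> | /mapP[i]]; first by rewrite leqnn -addn1 leq_add2l mult_gt0.
by rewrite mem_iota => /andP[_ ik] ->; rewrite gen_lt_double // leq_addr.
Qed.

Lemma Srep_split y : Srep y -> 0 < y -> exists2 g, g \in gens & g <= y /\ Srep (y - g).
Proof.
move=> [[|c] [mu ->]] y0; last first.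
  exists mult; first exact: mem_head.
  by rewrite mulSn -addnA leq_addr addKn; split=> //; exists c, mu.
rewrite mul0n add0n in y0 *.
have [i ik mui] : exists2 i, i < k & 0 < mu i.
  case: (boolP [exists i : 'I_k, 0 < mu i]) => [/existsP [i mui] | /existsPn none].
    by exists (nat_of_ord i).
  move: y0; rewrite /comb big1 // => i _.
  by move: (none i); rewrite -eqn0Ngt => /eqP ->.
exists (gen i); first by rewrite in_cons; apply/orP; right; apply: map_f; rewrite mem_iota.
rewrite (comb_remove ik mui) mul1n addnK leq_addl; split=> //; exact: Srep_comb.
Qed.

Lemma Srep_ge_mult y : Srep y -> 0 < y -> mult <= y.
Proof.
move=> sy y0; have [g /gens_bounds /andP[mg _] [gy _]] := Srep_split sy y0.
exact: leq_trans mg gy.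
Qed.

(* The minimal generators of S are exactly m, g_0, ..., g_(k-1): these lie
   below 2m so cannot be decomposed, and any indecomposable element is a
   generator by Srep_split. *)
Lemma minimal_generator_gens y : minimal_generator S y <-> y \in gens.
Proof.
split.
  move=> [/inSP sy y0 nodec].
  have [g gg [gy sg]] := Srep_split sy y0.
  have /andP[mg _] := gens_bounds gg; have m0 := mult_gt0.
  case: (posnP (y - g)) => [yg | yg0]; first by have -> : y = g by lia.
  case: nodec; exists g, (y - g); split; [lia | done | exact/inSP/gens_Srep | exact/inSP | lia].
move=> gg; have /andP[mg gm] := gens_bounds gg; split.
- exact/inSP/gens_Srep.
- exact: leq_trans mult_gt0 mg.
- move=> [x [z [x0 z0 /inSP sx /inSP sz xz]]].
  by have := Srep_ge_mult sx x0; have := Srep_ge_mult sz z0; lia.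
Qed.

Lemma S_minimal_generators : minimal_generators S gens.
Proof. by split=> [|y]; [exact: gens_sorted | exact: iff_sym (minimal_generator_gens y)]. Qed.

Lemma S_numerical : numerical_semigroup S.
Proof.
split.
- by apply/inSP; exact: (Srep_mult 0).
- by move=> x y /inSP sx /inSP sy; apply/inSP; exact: Srep_add.
- by exists ((\sum_(i < k) a i) * mult) => n /Srep_large /inSP.
Qed.

Lemma S_multiplicity : multiplicity S mult.
Proof.
split; [apply/inSP; exact: gens_Srep (mem_head _ _) | exact: mult_gt0 |].
by move=> s /inSP; exact: Srep_ge_mult.
Qed.

Lemma S_embedding_dimension : embedding_dimension S k.+1.
Proof. by exists gens; rewrite /= size_mkseq; split=> //; exact: S_minimal_generators. Qed.

Lemma S_alpha_rectangular : alpha_rectangular S.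
Proof.
exists gens; split; first exact: S_minimal_generators.
exists (mkseq (fun i => (a i).-1) k); rewrite /= !size_mkseq; split=> // [i ik | x].
  by rewrite !nth_mkseq //; exact: alpha_gen.
apply: iff_trans (apery_digits x) _; split.
- move=> [lam dlam ->]; exists (mkseq lam k); rewrite size_mkseq; split=> // [i ik |].
    by rewrite !nth_mkseq //; have := dlam i ik; lia.
  by apply: eq_bigr => i _; rewrite !nth_mkseq.
- move=> [lam [size_lam lam_le ->]]; exists (nth 0 lam).
    move=> i ik; have := lam_le i; rewrite size_lam nth_mkseq // => /(_ ik).
    by have := a_gt1 ik; lia.
  by rewrite size_lam; apply: eq_bigr => i _; rewrite nth_mkseq.
Qed.

End Construction.

Theorem mainTheorem11 (m nu : nat) :
  0 < m -> 2 <= nu -> nu.-1 <= bigomega m ->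
  exists S : pred nat,
    [/\ numerical_semigroup S, multiplicity S m,
        embedding_dimension S nu & alpha_rectangular S].
Proof.
move=> m0 nu2 hom.
have [a [a_gt1 ->]] := bigomega_factorization (ltac:(lia) : 0 < nu.-1) m0 hom.
rewrite -(prednK (ltnW nu2)).
exists (S nu.-1 a); split.
- exact: S_numerical a_gt1.
- exact: S_multiplicity a_gt1.
- exact: S_embedding_dimension a_gt1.
- exact: S_alpha_rectangular a_gt1.
Qed.
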